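(* Let $\alpha\in(0,1)$, $\gamma,\beta>0$, $r_0>0$, $Y=B(0,r_0)\subset\mathbb R\oplus\mathbb R^{d-1}$, $\mathcal X(x)=\|x\|^\alpha Ax$ with $A=\gamma\,\mathrm{Id}_{\mathbb R}\oplus(-\beta\,\mathrm{Id}_{\mathbb R^{d-1}})$. Let $x$ be a trajectory of $\mathcal X$ entering $Y$ at time $0$ and leaving it at time $T_0$, $\theta(t)$ the angle between $x(t)$ and $\mathbb R\times\{0\}$, and let $s\in(0,\infty)$ with $\tan\theta(T_0)<s<\tan\theta(0)$, with $T_s$ the time at which $\tan\theta(T_s)=s$. (a) If $s^2>\gamma/\beta$, then $\chi(s):=\frac{\gamma}{\gamma+\beta}\left(1+\frac1{s^2}\right)<1$ and $T_s\le\chi(s)T_0$. (b) If $s^2<\gamma/\beta$, then $\chi'(s):=\frac{\gamma-\beta s^2}{\gamma+\beta}>0$ and $T_s\ge\chi'(s)T_0$. *)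

From HB Require Import structures.
From mathcomp Require Import all_boot all_order all_algebra.
From mathcomp Require Import all_classical all_reals all_analysis.
Set Implicit Arguments. Unset Strict Implicit. Unset Printing Implicit Defensive.
Import Order.TTheory GRing.Theory Num.Theory.
Import numFieldNormedType.Exports.
Local Open Scope ring_scope.

(* Points of R^d = R (+) R^(d-1) are row vectors 'rV[R]_(n.+1), d = n+1;
   coordinate ord0 is the R-factor, coordinates 1..n the R^(d-1)-factor. *)

Definition enorm {R : realType} {n : nat} (x : 'rV[R]_n) : R :=
  Num.sqrt (\sum_(i < n) x ord0 i ^+ 2).

Definition perp_norm {R : realType} {n : nat} (x : 'rV[R]_n.+1) : R :=
  Num.sqrt (\sum_(i < n.+1 | i != ord0) x ord0 i ^+ 2).

Definition Amat {R : realType} (n : nat) (gamma beta : R) : 'M[R]_n.+1 :=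
  diag_mx (\row_(i < n.+1) if i == ord0 then gamma else - beta).

(* The vector field  X(x) = ||x||^alpha A x  (A is diagonal, so x *m A = (A x^T)^T) *)
Definition vfield {R : realType} (n : nat) (alpha gamma beta : R)
    (x : 'rV[R]_n.+1) : 'rV[R]_n.+1 :=
  (powR (enorm x) alpha) *: (x *m Amat n gamma beta).

Definition angle_axis {R : realType} {n : nat} (x : 'rV[R]_n.+1) : R :=
  acos (`|x ord0 ord0| / enorm x).

(* Write [U = x_1^2] and [N = |x|^2], so that [U / N = cos^2 theta].  Along the
   flow [U / N] is nondecreasing, and the clock [E = N^(-alpha/2) = |x|^(-alpha)]
   satisfies [E' = alpha (beta - (gamma + beta) U / N)], which depends on the angle
   only.  The trajectory enters and leaves [Y] on the same sphere, so
   [E 0 = E T0].  Before [Ts] the ratio lies in [[0, c]] and after [Ts] in [[c, 1]],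
   where [c = 1 / (1 + s^2)]; comparing [E'] with the corresponding constants on
   [[0, Ts]] and [[Ts, T0]] (mean value theorem) bounds [Ts / T0] from both sides. *)

From HB Require Import structures.
From mathcomp Require Import all_boot all_order all_algebra.
From mathcomp Require Import all_classical all_reals all_analysis.
From mathcomp Require Import ring lra.
Import Order.TTheory GRing.Theory Num.Theory.
Import numFieldNormedType.Exports.
Local Open Scope ring_scope.
Local Open Scope classical_set_scope.

Section real_calculus.
Context {R : realType}.

Lemma increment_bounds (f df : R -> R) (a b lo hi : R) : a <= b ->
  {within `[a, b], continuous f} ->
  (forall t, a < t < b -> is_derive t 1 f (df t)) ->
  (forall t, a < t < b -> lo <= df t <= hi) ->
  lo * (b - a) <= f b - f a <= hi * (b - a).
Proof.
rewrite le_eqVlt => /predU1P[<- _ _ _|ab cf fdf dfb]; first by rewrite !subrr !mulr0 lexx.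
have [t] := MVT ab (fun t tab => fdf t tab) cf; rewrite in_itv /= => /dfb /andP[lo_t t_hi] ->.
by rewrite !ler_pM2r ?subr_gt0 // lo_t t_hi.
Qed.

Lemma within_continuousM (A : set R) (f g : R -> R) :
  {within A, continuous f} -> {within A, continuous g} ->
  {within A, continuous (f \* g)}.
Proof. by move=> cf cg t; apply: cvgM; [exact: cf | exact: cg]. Qed.

End real_calculus.

Section radial_angular_system.
Context {R : realType} {alpha gamma beta T0 : R} {U N : R -> R}.
(* [U] and [N] stand for [x_1(t)^2] and [|x(t)|^2] along a trajectory. *)
Hypotheses (alpha_gt0 : 0 < alpha) (gamma_gt0 : 0 < gamma) (beta_gt0 : 0 < beta).
Hypotheses (U_cont : {within `[0, T0], continuous U})
  (N_cont : {within `[0, T0], continuous N}).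
Hypothesis U_deriv : forall t, 0 < t < T0 ->
  is_derive t 1 U (2 * gamma * N t `^ (alpha / 2) * U t).
Hypothesis N_deriv : forall t, 0 < t < T0 ->
  is_derive t 1 N (2 * N t `^ (alpha / 2) * (gamma * U t - beta * (N t - U t))).
Hypotheses (U_ge0 : forall t, 0 <= U t) (U_le_N : forall t, U t <= N t)
  (U0_gt0 : 0 < U 0).

Lemma U_gt0 t : 0 <= t <= T0 -> 0 < U t.
Proof.
case/andP=> t_ge0 t_le; apply: (lt_le_trans U0_gt0).
apply: (ger0_derive1_ndecr _ _ U_cont) => // [y|y]; rewrite in_itv /= => /U_deriv [] //.
by rewrite derive1E => _ ->; rewrite !mulr_ge0 ?powR_ge0 // ltW.
Qed.

Lemma N_gt0 t : 0 <= t <= T0 -> 0 < N t.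
Proof. by move=> /U_gt0 Ut; exact: lt_le_trans Ut (U_le_N t). Qed.

Lemma is_derive_ratio t : 0 < t < T0 -> is_derive t 1 (fun t => U t / N t)
  (2 * N t `^ (alpha / 2) * (gamma + beta) * U t * (N t - U t) / N t ^+ 2).
Proof.
move=> t_in; have /lt0r_neq0 Nt_neq0 : 0 < N t by apply: N_gt0; case/andP: t_in => *; rewrite !ltW.
have -> : (fun t => U t / N t) = U * (fun t => (N t)^-1) by [].
have := is_deriveM (U_deriv _ t_in) (is_deriveV Nt_neq0 (N_deriv _ t_in)).
move/is_derive_eq; apply.
by rewrite /GRing.scale /=; field.
Qed.

Lemma ratio_nondecreasing a b : 0 <= a -> a <= b -> b <= T0 -> U a / N a <= U b / N b.
Proof.
apply: (@ger0_derive1_ndecr R (fun t => U t / N t)) => [t|t|].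
- by rewrite in_itv /= => /is_derive_ratio [].
- rewrite in_itv /= derive1E => t_in; have [_ ->] := is_derive_ratio _ t_in.
  have Nt_gt0 : 0 < N t by apply: N_gt0; case/andP: t_in => *; rewrite !ltW.
  rewrite divr_ge0 ?exprn_ge0 ?(ltW Nt_gt0) //.
  by rewrite !mulr_ge0 ?powR_ge0 ?U_ge0 ?subr_ge0 ?U_le_N // addr_ge0 ?ltW.
- have -> : (fun t => U t / N t) = U \* (GRing.inv \o N) by [].
  apply: within_continuousM U_cont _.
  apply: within_continuous_comp N_cont => _ /set_mem[t t_in <-].
  by apply: inv_continuous; rewrite gt_eqF // N_gt0 //; rewrite /= in_itv in t_in.
Qed.

Lemma is_derive_Npow t : 0 < t < T0 ->
  is_derive t 1 (fun t => N t `^ (- (alpha / 2)))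
    (alpha * (beta - (gamma + beta) * (U t / N t))).
Proof.
move=> t_in; have Nt_gt0 : 0 < N t by apply: N_gt0; case/andP: t_in => *; rewrite !ltW.
have := is_derive1_comp (is_derive1_powR (- (alpha / 2)) Nt_gt0) (N_deriv _ t_in).
move/is_derive_eq; apply.
have -> : N t `^ (- (alpha / 2) - 1) = (N t)^-1 / N t `^ (alpha / 2).
  rewrite -[(N t)^-1]powR_inv1 ?ltW // -powRB ?lt0r_neq0 ?implybT //.
  by congr (_ `^ _); ring.
by rewrite /GRing.scale /=; field; rewrite !lt0r_neq0 // powR_gt0.
Qed.

Lemma Npow_continuous : {within `[0, T0], continuous (fun t => N t `^ (- (alpha / 2)))}.
Proof.
apply: (@within_continuous_comp _ _ _ _ _ (fun y => y `^ (- (alpha / 2)))) N_cont.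
move=> _ /set_mem[t t_in <-]; rewrite /= in_itv /= in t_in.
have [+ _] := is_derive1_powR (- (alpha / 2)) (N_gt0 _ t_in).
by move/derivable1_diffP/differentiable_continuous.
Qed.

Lemma hitting_time_bounds Ts cs : 0 <= Ts <= T0 -> N 0 = N T0 -> U Ts / N Ts = cs ->
  (gamma + beta) * (1 - cs) * Ts <= gamma * T0 /\
  ((gamma + beta) * cs - beta) * T0 <= (gamma + beta) * cs * Ts.
Proof.
move=> /andP[Ts_ge0 Ts_le] N0T cs_def.
pose E t := N t `^ (- (alpha / 2)).
pose slope c := alpha * (beta - (gamma + beta) * c).
have gb_gt0 : 0 < gamma + beta by rewrite addr_gt0.
have slope_le c c' : c <= c' -> slope c' <= slope c.
  move=> cc'; rewrite /slope; apply: (@ler_wpM2l _ alpha (ltW alpha_gt0)).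
  exact: lerB (lexx _) (@ler_wpM2l _ _ (ltW gb_gt0) _ _ cc').
have E_incr a b c c' : 0 <= a -> a <= b -> b <= T0 ->
    (forall t, a < t < b -> c <= U t / N t <= c') ->
    slope c' * (b - a) <= E b - E a <= slope c * (b - a).
  move=> a_ge0 ab b_le c_bnd.
  apply: (@increment_bounds R E (fun t => slope (U t / N t)) _ _ _ _ ab).
  - apply: continuous_subspaceW Npow_continuous.
    by apply: subset_itv; rewrite bnd_simp.
  - by move=> t t_in; apply: is_derive_Npow; apply/andP; split; lra.
  - by move=> t /c_bnd /andP[ct c't]; rewrite !slope_le.
have /andP[lo1 hi1] : slope cs * (Ts - 0) <= E Ts - E 0 <= slope 0 * (Ts - 0).
  apply: E_incr => // t /andP[t_gt0 t_lt].
  have Nt_gt0 : 0 < N t by apply: N_gt0; rewrite !ltW // (lt_le_trans t_lt).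
  rewrite divr_ge0 ?U_ge0 ?(ltW Nt_gt0) //= -cs_def.
  exact: ratio_nondecreasing (ltW t_gt0) (ltW t_lt) Ts_le.
have /andP[lo2 hi2] : slope 1 * (T0 - Ts) <= E T0 - E Ts <= slope cs * (T0 - Ts).
  apply: E_incr => // t /andP[t_gt0 t_lt].
  have Nt_gt0 : 0 < N t by apply: N_gt0; rewrite !ltW // (le_lt_trans Ts_ge0).
  rewrite ler_pdivrMr // mul1r U_le_N andbT -cs_def.
  exact: ratio_nondecreasing Ts_ge0 (ltW t_gt0) (ltW t_lt).
have E0T : E 0 = E T0 by rewrite /E N0T.
move: lo1 hi1 lo2 hi2; rewrite /slope E0T => lo1 hi1 lo2 hi2.
split; rewrite -subr_ge0 -(pmulr_rge0 _ alpha_gt0); lra.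
Qed.

End radial_angular_system.

Definition sqnorm {R : realType} {n : nat} (v : 'rV[R]_n) : R :=
  \sum_(i < n) v ord0 i ^+ 2.

Section coordinates.
Context {R : realType} {n : nat}.

Lemma sqnorm_ge0 (v : 'rV[R]_n) : 0 <= sqnorm v.
Proof. by apply: sumr_ge0 => i _; exact: sqr_ge0. Qed.

Lemma sqr_coord_continuous i : continuous (fun v : 'rV[R]_n => v ord0 i ^+ 2).
Proof.
move=> v; apply: (@continuous_comp _ _ _ (fun v : 'rV[R]_n => v ord0 i) (fun r => r ^+ 2)).
  exact: coord_continuous.
exact: exprn_continuous.
Qed.

Lemma sqnorm_continuous : continuous (@sqnorm R n).
Proof.
move=> v; apply: (@cvg_big _ _ +%R 0 xpredT add_continuous) => [|i _].
  exact: nbhs_filter.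
exact: sqr_coord_continuous.
Qed.

Lemma is_derive_coord {x : R -> 'rV[R]_n} {t : R} {V : 'rV[R]_n} (i : 'I_n) :
  is_derive t 1 x V -> is_derive t 1 (fun t => x t ord0 i) (V ord0 i).
Proof.
case=> dx <-; apply: DeriveDef; first exact: (derivable_mxP x t 1).1 dx ord0 i.
by rewrite (derive_mx dx) mxE.
Qed.

Lemma is_derive_sqr_coord {x : R -> 'rV[R]_n} {t : R} {V : 'rV[R]_n} (i : 'I_n) :
  is_derive t 1 x V -> is_derive t 1 (fun t => x t ord0 i ^+ 2) (2 * x t ord0 i * V ord0 i).
Proof.
move/(is_derive_coord i) => dxi.
have -> : (fun t => x t ord0 i ^+ 2) = (fun t => x t ord0 i) * (fun t => x t ord0 i).
  by apply/funext => y; rewrite /= expr2.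
by apply: is_derive_eq (is_deriveM dxi dxi) _; rewrite /GRing.scale /=; ring.
Qed.

End coordinates.

Section vector_field.
Context {R : realType} {n : nat}.

Lemma sqnorm_split (v : 'rV[R]_n.+1) :
  sqnorm v = v ord0 ord0 ^+ 2 + \sum_(i < n.+1 | i != ord0) v ord0 i ^+ 2.
Proof. by rewrite /sqnorm (bigD1 ord0). Qed.

Lemma sqr_first_le_sqnorm (v : 'rV[R]_n.+1) : v ord0 ord0 ^+ 2 <= sqnorm v.
Proof. by rewrite sqnorm_split lerDl sumr_ge0 // => i _; exact: sqr_ge0. Qed.

Lemma powR_enorm (alpha : R) (v : 'rV[R]_n.+1) : enorm v `^ alpha = sqnorm v `^ (alpha / 2).
Proof. by rewrite /enorm -powR12_sqrt ?sqnorm_ge0 // -powRrM mulrC. Qed.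

Lemma vfield_coord (alpha gamma beta : R) (v : 'rV[R]_n.+1) i : vfield alpha gamma beta v ord0 i =
  sqnorm v `^ (alpha / 2) * (v ord0 i * (if i == ord0 then gamma else - beta)).
Proof. by rewrite /vfield /Amat mxE mul_mx_diag !mxE powR_enorm. Qed.

Context {alpha gamma beta : R} {x : R -> 'rV[R]_n.+1} {t : R}.
Hypothesis x_deriv : is_derive t 1 x (vfield alpha gamma beta (x t)).

Lemma is_derive_sqr_first : is_derive t 1 (fun t => x t ord0 ord0 ^+ 2)
  (2 * gamma * sqnorm (x t) `^ (alpha / 2) * x t ord0 ord0 ^+ 2).
Proof.
have /is_derive_eq := is_derive_sqr_coord ord0 x_deriv; apply.
by rewrite vfield_coord eqxx; ring.
Qed.

Lemma is_derive_sqnorm : is_derive t 1 (fun t => sqnorm (x t))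
  (2 * sqnorm (x t) `^ (alpha / 2) *
   (gamma * x t ord0 ord0 ^+ 2 - beta * (sqnorm (x t) - x t ord0 ord0 ^+ 2))).
Proof.
have := is_derive_sum (fun i => is_derive_sqr_coord i x_deriv).
rewrite fct_sumE => /is_derive_eq; apply.
have -> : sqnorm (x t) - x t ord0 ord0 ^+ 2 = \sum_(i < n.+1 | i != ord0) x t ord0 i ^+ 2.
  by rewrite sqnorm_split addrC addKr.
rewrite (bigD1 ord0) //= vfield_coord eqxx.
have -> : \sum_(i < n.+1 | i != ord0) 2 * x t ord0 i * vfield alpha gamma beta (x t) ord0 i =
    - (2 * sqnorm (x t) `^ (alpha / 2) * beta) * \sum_(i < n.+1 | i != ord0) x t ord0 i ^+ 2.
  rewrite big_distrr /=; apply: eq_bigr => i /negbTE i_neq0.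
  by rewrite vfield_coord i_neq0; ring.
ring.
Qed.

End vector_field.

Section angle.
Context {R : realType}.

Lemma tan_acos (y : R) : -1 <= y <= 1 -> tan (acos y) = Num.sqrt (1 - y ^+ 2) / y.
Proof. by move=> y_in; rewrite /tan sin_acos // acosK // in_itv. Qed.

Lemma sqr_eq_of_tan_acos (y s : R) : 0 <= y <= 1 -> 0 < s -> tan (acos y) = s ->
  y ^+ 2 = (1 + s ^+ 2)^-1.
Proof.
move=> /andP[y_ge0 y_le1] s_gt0; rewrite tan_acos ?y_le1 ?andbT; last first.
  by rewrite (le_trans _ y_ge0) // lerN10.
have [->|y_neq0 tan_s] := eqVneq y 0; first by rewrite invr0 mulr0 => s0; lra.
have : Num.sqrt (1 - y ^+ 2) ^+ 2 = (s * y) ^+ 2 by rewrite -tan_s divfK.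
rewrite sqr_sqrtr ?subr_ge0 ?expr_le1 // exprMn => sqr_eq.
have q_neq0 : 1 + s ^+ 2 != 0 by rewrite gt_eqF // ltr_pwDl // sqr_ge0.
by rewrite -(mulfK q_neq0 (y ^+ 2)) -[X in _ = X]mul1r; congr (_ * _); lra.
Qed.

Context {n : nat}.
Implicit Type v : 'rV[R]_n.+1.

Lemma sqr_enorm v : enorm v ^+ 2 = sqnorm v.
Proof. exact: sqr_sqrtr (sqnorm_ge0 v). Qed.

Lemma sqr_cos_angle_axis v : (`|v ord0 ord0| / enorm v) ^+ 2 = v ord0 ord0 ^+ 2 / sqnorm v.
Proof. by rewrite -sqr_enorm exprMn exprVn real_normK ?num_real. Qed.

Lemma cos_angle_axis_bounds v : 0 <= `|v ord0 ord0| / enorm v <= 1.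
Proof.
rewrite divr_ge0 ?sqrtr_ge0 //=.
have [->|enorm_neq0] := eqVneq (enorm v) 0; first by rewrite invr0 mulr0.
rewrite ler_pdivrMr ?mul1r; last by rewrite lt_neqAle eq_sym enorm_neq0 sqrtr_ge0.
by rewrite -sqrtr_sqr ler_sqrt ?sqnorm_ge0 // sqr_first_le_sqnorm.
Qed.

(* When [v ord0 ord0 = 0] the angle is [pi / 2], whose tangent is [0] since
   [cos (pi / 2) = 0] and [_ / 0 = 0]. *)
Lemma first_coord_neq0 {v} {s : R} : 0 < s -> s < tan (angle_axis v) -> v ord0 ord0 != 0.
Proof.
move=> s_gt0; apply: contraTneq => v0; rewrite /angle_axis v0 normr0 mul0r.
by rewrite tan_acos ?invr0 ?mulr0 -?leNgt ?ltW // lerN10 lexx.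
Qed.

Lemma sqr_cos_of_tan_angle_axis {v} {s : R} : 0 < s -> tan (angle_axis v) = s ->
  v ord0 ord0 ^+ 2 / sqnorm v = (1 + s ^+ 2)^-1.
Proof.
move=> s_gt0 tan_s; rewrite -sqr_cos_angle_axis.
exact: sqr_eq_of_tan_acos (cos_angle_axis_bounds v) s_gt0 tan_s.
Qed.

End angle.

Section time_ratios.
Context {R : realType} {gamma beta s : R}.
Hypotheses (gamma_gt0 : 0 < gamma) (beta_gt0 : 0 < beta) (s_gt0 : 0 < s).

Let gb_neq0 : gamma + beta != 0. Proof. by rewrite gt_eqF // addr_gt0. Qed.
Let s_neq0 : s != 0. Proof. exact: lt0r_neq0. Qed.
Let q_neq0 : 1 + s ^+ 2 != 0. Proof. by rewrite gt_eqF // ltr_pwDl // sqr_ge0. Qed.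

Lemma chi_lt1 : gamma / beta < s ^+ 2 -> gamma / (gamma + beta) * (1 + 1 / s ^+ 2) < 1.
Proof.
move=> s2_gt; rewrite -subr_gt0.
have -> : 1 - gamma / (gamma + beta) * (1 + 1 / s ^+ 2) =
    (s ^+ 2 - gamma / beta) * (beta / ((gamma + beta) * s ^+ 2)).
  by field; rewrite gb_neq0 s_neq0 gt_eqF.
by rewrite mulr_gt0 ?subr_gt0 // divr_gt0 ?mulr_gt0 ?addr_gt0 ?exprn_gt0.
Qed.

Lemma le_chi_mul_of_bound Ts T0 :
  (gamma + beta) * (1 - (1 + s ^+ 2)^-1) * Ts <= gamma * T0 ->
  Ts <= gamma / (gamma + beta) * (1 + 1 / s ^+ 2) * T0.
Proof.
move=> bound; rewrite -subr_ge0.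
have -> : gamma / (gamma + beta) * (1 + 1 / s ^+ 2) * T0 - Ts =
    (gamma * T0 - (gamma + beta) * (1 - (1 + s ^+ 2)^-1) * Ts) *
    ((1 + s ^+ 2) / ((gamma + beta) * s ^+ 2)).
  by field; rewrite gb_neq0 s_neq0 q_neq0.
by rewrite mulr_ge0 ?subr_ge0 // divr_ge0 ?mulr_ge0 ?addr_ge0 ?sqr_ge0 ?ltW.
Qed.

Lemma chi'_gt0 : s ^+ 2 < gamma / beta -> 0 < (gamma - beta * s ^+ 2) / (gamma + beta).
Proof.
move=> s2_lt; have -> : (gamma - beta * s ^+ 2) / (gamma + beta) =
    (gamma / beta - s ^+ 2) * (beta / (gamma + beta)).
  by field; rewrite gb_neq0 gt_eqF.
by rewrite mulr_gt0 ?subr_gt0 // divr_gt0 ?addr_gt0.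
Qed.

Lemma chi'_mul_le_of_bound Ts T0 :
  ((gamma + beta) * (1 + s ^+ 2)^-1 - beta) * T0 <= (gamma + beta) * (1 + s ^+ 2)^-1 * Ts ->
  (gamma - beta * s ^+ 2) / (gamma + beta) * T0 <= Ts.
Proof.
move=> bound; rewrite -subr_ge0.
have -> : Ts - (gamma - beta * s ^+ 2) / (gamma + beta) * T0 =
    ((gamma + beta) * (1 + s ^+ 2)^-1 * Ts - ((gamma + beta) * (1 + s ^+ 2)^-1 - beta) * T0) *
    ((1 + s ^+ 2) / (gamma + beta)).
  by field; rewrite gb_neq0 q_neq0.
by rewrite mulr_ge0 ?subr_ge0 // divr_ge0 ?addr_ge0 ?sqr_ge0 ?ltW.
Qed.

End time_ratios.

Theorem lemma7p5 (R : realType) (n : nat) (alpha gamma beta r0 : R)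
  (x : R -> 'rV[R]_n.+1) (T0 s : R) :
  0 < alpha -> alpha < 1 -> 0 < gamma -> 0 < beta -> 0 < r0 ->
  0 < T0 ->
  (* x is a trajectory of the vector field on [0, T0] *)
  {within `[0, T0], continuous x} ->
  (forall t, 0 < t < T0 -> is_derive t (1 : R) x (vfield alpha gamma beta (x t))) ->
  (* x enters Y = B(0, r0) at time 0 and leaves it at time T0 *)
  enorm (x 0) = r0 -> enorm (x T0) = r0 ->
  (forall t, 0 < t < T0 -> enorm (x t) < r0) ->
  0 < s ->
  tan (angle_axis (x T0)) < s -> s < tan (angle_axis (x 0)) ->
  forall Ts, 0 <= Ts <= T0 -> tan (angle_axis (x Ts)) = s ->
  (s ^+ 2 > gamma / beta ->
     gamma / (gamma + beta) * (1 + 1 / s ^+ 2) < 1 /\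
     Ts <= gamma / (gamma + beta) * (1 + 1 / s ^+ 2) * T0) /\
  (s ^+ 2 < gamma / beta ->
     0 < (gamma - beta * s ^+ 2) / (gamma + beta) /\
     (gamma - beta * s ^+ 2) / (gamma + beta) * T0 <= Ts).
Proof.
move=> alpha_gt0 _ gamma_gt0 beta_gt0 _ _ x_cont x_deriv x0_norm xT0_norm _ s_gt0 _ tan_0
  Ts Ts_in tan_Ts.
pose U t := x t ord0 ord0 ^+ 2; pose N t := sqnorm (x t).
have U_cont : {within `[0, T0], continuous U}.
  exact: within_continuous_comp (fun v _ => sqr_coord_continuous ord0 v) x_cont.
have N_cont : {within `[0, T0], continuous N}.
  exact: within_continuous_comp (fun v _ => sqnorm_continuous v) x_cont.
have U0_gt0 : 0 < U 0 by rewrite exprn_even_gt0 // (first_coord_neq0 s_gt0 tan_0).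
have N0T : N 0 = N T0 by rewrite /N -!sqr_enorm x0_norm xT0_norm.
have cs_def : U Ts / N Ts = (1 + s ^+ 2)^-1 := sqr_cos_of_tan_angle_axis s_gt0 tan_Ts.
have [bound_a bound_b] := hitting_time_bounds alpha_gt0 gamma_gt0 beta_gt0 U_cont N_cont
  (fun t t_in => is_derive_sqr_first (x_deriv t t_in))
  (fun t t_in => is_derive_sqnorm (x_deriv t t_in))
  (fun t => sqr_ge0 _) (fun t => sqr_first_le_sqnorm _) U0_gt0 Ts _ Ts_in N0T cs_def.
split=> s2; split.
- exact: chi_lt1.
- exact: le_chi_mul_of_bound.
- exact: chi'_gt0.
- exact: chi'_mul_le_of_bound.
Qed.
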